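(* Let $\gamma\in[0,1]$ and let $(\gamma_n)$ be a $[0,1]$-valued sequence with $|\gamma_n-\gamma|=O(1/n)$. Then for every $u\in(0,1)$, $\lim_{n\to\infty}\phi_{n,\gamma_n}(u)=\tfrac12\mathbf 1_{\{\gamma\}}(u)+\mathbf 1_{(\gamma,1]}(u)$, and $\lim_{n\to\infty}\phi_{n,\gamma_n}'(u)$ equals $0$ if $u\ne\gamma$ and $+\infty$ if $u=\gamma$.
   Context: $[x]$ is the integer part. $\phi_{n,\alpha}(t)=\sum_{j=1+[(n-1)\alpha]}^n\binom{n}{j}t^j(1-t)^{n-j}$, $t\in[0,1]$. $\mathbf 1_A$ is the indicator of $A$. *)

From Stdlib Require Import Reals Lra ZArith ClassicalEpsilon.
From Coquelicot Require Import Coquelicot.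
Open Scope R_scope.

Definition intpart (x : R) : Z := Int_part x.

Definition phi (n : nat) (alpha : R) (t : R) : R :=
  sum_f_R0 (fun j =>
    if Z.leb (1 + intpart ((INR n - 1) * alpha))%Z (Z.of_nat j)
    then Binomial.C n j * t ^ j * (1 - t) ^ (n - j)
    else 0) n.

Definition indic (A : R -> Prop) (x : R) : R :=
  if excluded_middle_informative (A x) then 1 else 0.

From Stdlib Require Import Reals Lra Lia ZArith ClassicalEpsilon.
From Coquelicot Require Import Coquelicot.
Open Scope R_scope.

(* With k_n = 1 + [(n-1) gamma_n], phi_{n,gamma_n}(u) = P(Bin(n,u) >= k_n), and
   the hypothesis |gamma_n - gamma| = O(1/n) makes k_n = n gamma + O(1).  Its
   derivative is the classical d/du P(Bin(n,u) >= k) = n P(Bin(n-1,u) = k-1).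
   Everything then reduces to elementary estimates on the binomial law:
   - first and second moments, and Chebyshev's inequality for tails;
   - the identity (m+1) p q P(Bin(m,p) = a) = E[(X - (m+1)p) 1{X > a}],
     X ~ Bin(m+1,p), which gives both the derivative formula and the bounds
     c/sqrt(npq) <= P(Bin(n,p) = a) <= 1/sqrt(npq) for a near the mean;
   - beyond the mean the probabilities decrease, so at linear distance n d
     from the mean a single probability is O(1/(n^2 d^3));
   - near the mode c = [np] the law is almost symmetric, so
     P(X > c) ~ P(X < c) ~ 1/2.
   For u <> gamma the threshold is at linear distance from the mean n u: the
   tail tends to 0 or 1 (Chebyshev) and the derivative is O(1/n).  For
   u = gamma the threshold is within O(1) of the mean: the tail tends to 1/2
   (near-symmetry, and tails are 1/sqrt(npq)-Lipschitz in the threshold) and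
   the derivative is at least of order sqrt n. *)

(** Finite sums with [n] terms, [sumr f n = f 0 + ... + f (n-1)]: unlike
    [sum_f_R0], empty sums and windows of [d] terms need no offset. *)

Fixpoint sumr (f : nat -> R) (n : nat) : R :=
  match n with O => 0 | S k => sumr f k + f k end.

Lemma sumr_ext f g n : (forall i, (i < n)%nat -> f i = g i) -> sumr f n = sumr g n.
Proof.
  induction n as [|n IH]; simpl; intros H; auto.
  rewrite IH by (intros; apply H; lia). now rewrite (H n) by lia.
Qed.

Lemma sumr_plus f g n : sumr (fun i => f i + g i) n = sumr f n + sumr g n.
Proof. induction n as [|n IH]; simpl; [lra|]. rewrite IH; lra. Qed.

Lemma sumr_minus f g n : sumr (fun i => f i - g i) n = sumr f n - sumr g n.
Proof. induction n as [|n IH]; simpl; [lra|]. rewrite IH; lra. Qed.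

Lemma sumr_scal c f n : sumr (fun i => c * f i) n = c * sumr f n.
Proof. induction n as [|n IH]; simpl; [lra|]. rewrite IH; lra. Qed.

Lemma sumr_const c n : sumr (fun _ => c) n = INR n * c.
Proof. induction n as [|n IH]; simpl sumr; [simpl; lra|]. rewrite IH, S_INR. ring. Qed.

Lemma sumr_le f g n : (forall i, (i < n)%nat -> f i <= g i) -> sumr f n <= sumr g n.
Proof.
  induction n as [|n IH]; simpl; intros H; [lra|].
  assert (f n <= g n) by (apply H; lia).
  assert (sumr f n <= sumr g n) by (apply IH; intros; apply H; lia). lra.
Qed.

Lemma sumr_nonneg f n : (forall i, (i < n)%nat -> 0 <= f i) -> 0 <= sumr f n.
Proof.
  intros H. rewrite <- (Rmult_0_r (INR n)), <- sumr_const. now apply sumr_le.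
Qed.

Lemma sumr_abs f n : Rabs (sumr f n) <= sumr (fun i => Rabs (f i)) n.
Proof.
  induction n as [|n IH]; simpl; [rewrite Rabs_R0; lra|].
  eapply Rle_trans; [apply Rabs_triang | lra].
Qed.

Lemma sumr_shift f n : sumr f (S n) = f O + sumr (fun i => f (S i)) n.
Proof.
  induction n as [|n IH]; [simpl; lra|].
  change (sumr f (S (S n))) with (sumr f (S n) + f (S n)). rewrite IH. simpl. lra.
Qed.

Lemma sumr_rev f n : sumr f n = sumr (fun i => f (n - 1 - i)%nat) n.
Proof.
  revert f; induction n as [|n IH]; intros f; [reflexivity|].
  rewrite sumr_shift. simpl sumr at 2. rewrite (IH (fun i => f (S i))).
  replace (S n - 1 - n)%nat with O by lia. rewrite Rplus_comm. f_equal.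
  - apply sumr_ext. intros i Hi. f_equal. lia.
  - f_equal; lia.
Qed.

Lemma sum_f_R0_sumr f n : sum_f_R0 f n = sumr f (S n).
Proof. induction n as [|n IH]; simpl; [lra|]. simpl in IH. now rewrite IH. Qed.

Lemma sumr_single f a n : (a < n)%nat ->
  sumr (fun x => if Nat.eqb x a then f x else 0) n = f a.
Proof.
  induction n as [|n IH]; intros H; [lia|]. simpl. destruct (Nat.eq_dec a n) as [->|Ha].
  - rewrite Nat.eqb_refl.
    rewrite (sumr_ext _ (fun _ => 0)), sumr_const; [lra|].
    intros i Hi. destruct (Nat.eqb_spec i n); [lia|auto].
  - rewrite IH by lia. destruct (Nat.eqb_spec n a); [lia|lra].
Qed.

Definition pmf (n : nat) (p : R) (a : nat) : R :=
  Binomial.C n a * p ^ a * (1 - p) ^ (n - a).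

Lemma pmf_nonneg n p a : 0 <= p <= 1 -> 0 <= pmf n p a.
Proof.
  intros Hp. unfold pmf.
  assert (0 < Binomial.C n a).
  { apply Rdiv_lt_0_compat; [|apply Rmult_lt_0_compat]; apply INR_fact_lt_0. }
  apply Rmult_le_pos; [apply Rmult_le_pos|]; try (apply pow_le; lra); lra.
Qed.

Lemma pmf_sum n p : sumr (pmf n p) (S n) = 1.
Proof.
  rewrite <- sum_f_R0_sumr. unfold pmf. rewrite <- binomial.
  replace (p + (1 - p)) with 1 by ring. apply pow1.
Qed.

Lemma C_absorb m b : (b <= m)%nat ->
  INR (S b) * Binomial.C (S m) (S b) = INR (S m) * Binomial.C m b.
Proof.
  intros H. unfold Binomial.C. replace (S m - S b)%nat with (m - b)%nat by lia.
  rewrite !fact_simpl, !mult_INR.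
  assert (INR (Factorial.fact b) <> 0) by apply INR_fact_neq_0.
  assert (INR (Factorial.fact m) <> 0) by apply INR_fact_neq_0.
  assert (INR (Factorial.fact (m - b)) <> 0) by apply INR_fact_neq_0.
  assert (INR (S b) <> 0) by (apply not_0_INR; lia).
  field. auto.
Qed.

Lemma pmf_size_bias m p h :
  sumr (fun x => INR x * pmf (S m) p x * h x) (S (S m)) =
  INR (S m) * p * sumr (fun x => pmf m p x * h (S x)) (S m).
Proof.
  rewrite sumr_shift. simpl INR at 1. rewrite !Rmult_0_l, Rplus_0_l.
  rewrite <- sumr_scal. apply sumr_ext. intros i Hi. unfold pmf.
  replace (S m - S i)%nat with (m - i)%nat by lia. simpl pow.
  transitivity ((INR (S i) * Binomial.C (S m) (S i)) * p * p ^ i * (1 - p) ^ (m - i) * h (S i));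
    [ring|]. rewrite C_absorb by lia. ring.
Qed.

Lemma pmf_mean n p : sumr (fun x => INR x * pmf n p x) (S n) = INR n * p.
Proof.
  destruct n as [|m]; [simpl; lra|].
  transitivity (sumr (fun x => INR x * pmf (S m) p x * 1) (S (S m))).
  { apply sumr_ext; intros; ring. }
  rewrite pmf_size_bias, (sumr_ext _ (pmf m p)) by (intros; ring).
  rewrite pmf_sum. ring.
Qed.

Lemma pmf_second_moment n p :
  sumr (fun x => INR x ^ 2 * pmf n p x) (S n) = INR n * p * (INR n * p - p + 1).
Proof.
  destruct n as [|m]; [simpl; lra|].
  transitivity (sumr (fun x => INR x * pmf (S m) p x * INR x) (S (S m))).
  { apply sumr_ext; intros; ring. }
  rewrite pmf_size_bias, (sumr_ext _ (fun x => INR x * pmf m p x + pmf m p x)).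
  - rewrite sumr_plus, pmf_mean, pmf_sum, S_INR. ring.
  - intros. rewrite S_INR. ring.
Qed.

Lemma pmf_centered n p : sumr (fun x => (INR x - INR n * p) * pmf n p x) (S n) = 0.
Proof.
  rewrite (sumr_ext _ (fun x => INR x * pmf n p x - (INR n * p) * pmf n p x))
    by (intros; ring).
  rewrite sumr_minus, sumr_scal, pmf_mean, pmf_sum. ring.
Qed.

Lemma pmf_variance n p :
  sumr (fun x => (INR x - INR n * p) ^ 2 * pmf n p x) (S n) = INR n * p * (1 - p).
Proof.
  rewrite (sumr_ext _ (fun x => (INR x ^ 2 * pmf n p x - (2 * (INR n * p)) * (INR x * pmf n p x))
     + (INR n * p) ^ 2 * pmf n p x)) by (intros; ring).
  rewrite sumr_plus, sumr_minus, !sumr_scal, pmf_second_moment, pmf_mean, pmf_sum. ring.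
Qed.

Definition tail (N : nat) (F : nat -> R) (a : nat) : R :=
  sumr (fun x => if Nat.leb a x then F x else 0) (S N).

Definition ptail (n : nat) (p : R) (a : nat) : R := tail n (pmf n p) a.

Lemma tail_step N F a : (a <= N)%nat -> tail N F a - tail N F (S a) = F a.
Proof.
  intros H. unfold tail. rewrite <- sumr_minus, <- (sumr_single F a (S N)) by lia.
  apply sumr_ext. intros i Hi.
  destruct (Nat.leb_spec a i), (Nat.leb_spec (S a) i), (Nat.eqb_spec i a); try lia; lra.
Qed.

Lemma tail_beyond N F a : (N < a)%nat -> tail N F a = 0.
Proof.
  intros H. unfold tail. rewrite (sumr_ext _ (fun _ => 0)), sumr_const; [lra|].
  intros i Hi. destruct (Nat.leb_spec a i); [lia|auto].
Qed.

Lemma tail_window N F a d : (a + d <= S N)%nat ->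
  tail N F a - tail N F (a + d) = sumr (fun j => F (a + j)%nat) d.
Proof.
  induction d as [|d IH]; intros H; [rewrite Nat.add_0_r; simpl; lra|].
  simpl sumr. rewrite <- IH by lia. replace (a + S d)%nat with (S (a + d)) by lia.
  rewrite <- (tail_step N F (a + d)) by lia. lra.
Qed.

Lemma tail_window_bound N F M a d : 0 <= M -> (forall x, (x <= N)%nat -> 0 <= F x <= M) ->
  0 <= tail N F a - tail N F (a + d) <= INR d * M.
Proof.
  intros HM HF. induction d as [|d IH]; [rewrite Nat.add_0_r; simpl; lra|].
  replace (a + S d)%nat with (S (a + d)) by lia. rewrite S_INR.
  destruct (Compare_dec.le_lt_dec (a + d) N) as [Hle|Hlt].
  - assert (H := tail_step N F (a + d) Hle). specialize (HF (a + d)%nat Hle). lra.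
  - rewrite (tail_beyond N F (a + d)), (tail_beyond N F (S (a + d))) in * by lia. lra.
Qed.

Lemma ptail_indicator n p a :
  ptail n p a = sumr (fun x => (if Nat.leb a x then 1 else 0) * pmf n p x) (S n).
Proof. apply sumr_ext. intros. destruct (Nat.leb a i); ring. Qed.

Lemma ptail_compl n p a :
  1 - ptail n p a = sumr (fun x => (if Nat.leb a x then 0 else 1) * pmf n p x) (S n).
Proof.
  unfold ptail, tail. rewrite <- (pmf_sum n p) at 1. rewrite <- sumr_minus.
  apply sumr_ext. intros.
  destruct (Nat.leb a i); ring.
Qed.

Lemma ptail_range n p a : 0 <= p <= 1 -> 0 <= ptail n p a <= 1.
Proof.
  intros Hp. rewrite ptail_indicator. split.
  - apply sumr_nonneg. intros i _. destruct (Nat.leb a i);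
      assert (H := pmf_nonneg n p i Hp); lra.
  - rewrite <- (pmf_sum n p) at 1. apply sumr_le. intros i _.
    destruct (Nat.leb a i); assert (H := pmf_nonneg n p i Hp); lra.
Qed.

Lemma ptail_lipschitz n p M a b : 0 <= p <= 1 -> (forall x, (x <= n)%nat -> pmf n p x <= M) ->
  Rabs (ptail n p a - ptail n p b) <= Rabs (INR a - INR b) * M.
Proof.
  intros Hp HB.
  assert (HM : 0 <= M) by (eapply Rle_trans; [apply (pmf_nonneg n p 0 Hp)|apply HB; lia]).
  assert (HF : forall x, (x <= n)%nat -> 0 <= pmf n p x <= M)
    by (intros; split; [apply pmf_nonneg|]; auto).
  unfold ptail. destruct (Nat.le_ge_cases a b) as [Hab|Hab].
  - replace b with (a + (b - a))%nat by lia.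
    assert (D := tail_window_bound n (pmf n p) M a (b - a) HM HF).
    assert (INR a <= INR b) by (apply le_INR; lia).
    rewrite plus_INR, minus_INR in * by lia.
    replace (INR a - (INR a + (INR b - INR a))) with (- (INR b - INR a)) by ring.
    rewrite Rabs_Ropp, !Rabs_right by lra. lra.
  - replace a with (b + (a - b))%nat by lia.
    assert (D := tail_window_bound n (pmf n p) M b (a - b) HM HF).
    assert (INR b <= INR a) by (apply le_INR; lia).
    rewrite plus_INR, minus_INR in * by lia.
    replace (INR b + (INR a - INR b)) with (INR a) by ring.
    rewrite Rabs_left1, Rabs_right by lra. lra.
Qed.

Lemma chebyshev n p w t : 0 <= p <= 1 -> 0 < t ->
  (forall x, (x <= n)%nat -> 0 <= w x <= 1) ->
  (forall x, (x <= n)%nat -> w x <> 0 -> t <= Rabs (INR x - INR n * p)) ->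
  sumr (fun x => w x * pmf n p x) (S n) <= INR n * p * (1 - p) / t ^ 2.
Proof.
  intros Hp Ht Hw1 Hw2.
  apply (Rle_trans _ (sumr (fun x => / t ^ 2 * ((INR x - INR n * p) ^ 2 * pmf n p x)) (S n))).
  2:{ rewrite sumr_scal, pmf_variance. right. field. lra. }
  apply sumr_le. intros i Hi. assert (HB := pmf_nonneg n p i Hp).
  assert (Ht2 : 0 < t ^ 2) by (apply pow_lt; lra).
  enough (w i <= / t ^ 2 * (INR i - INR n * p) ^ 2)
    by (rewrite <- Rmult_assoc; apply Rmult_le_compat_r; lra).
  destruct (Req_dec (w i) 0) as [E|E].
  - rewrite E. apply Rmult_le_pos; [left; apply Rinv_0_lt_compat; lra|apply pow2_ge_0].
  - assert (t ^ 2 <= (INR i - INR n * p) ^ 2).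
    { rewrite <- (pow2_abs (INR i - _)). apply pow_incr. split; [lra|]. apply Hw2; auto; lia. }
    apply (Rmult_le_reg_l (t ^ 2)); [lra|].
    rewrite <- Rmult_assoc, Rinv_r, Rmult_1_l by lra.
    assert (w i <= 1) by (apply Hw1; lia). nra.
Qed.

Lemma ptail_upper_chebyshev n p a t : 0 <= p <= 1 -> 0 < t -> INR n * p + t <= INR a ->
  ptail n p a <= INR n * p * (1 - p) / t ^ 2.
Proof.
  intros Hp Ht Ha. rewrite ptail_indicator. apply chebyshev; auto.
  - intros x _. destruct (Nat.leb a x); lra.
  - intros x _ Hw. destruct (Nat.leb_spec a x) as [Hx|]; [|lra].
    apply le_INR in Hx. rewrite Rabs_right; lra.
Qed.

Lemma ptail_lower_chebyshev n p a t : 0 <= p <= 1 -> 0 < t -> INR a <= INR n * p - t + 1 ->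
  1 - ptail n p a <= INR n * p * (1 - p) / t ^ 2.
Proof.
  intros Hp Ht Ha. rewrite ptail_compl. apply chebyshev; auto.
  - intros x _. destruct (Nat.leb a x); lra.
  - intros x _ Hw. destruct (Nat.leb_spec a x) as [|Hx]; [lra|].
    apply (le_INR (S x)) in Hx. rewrite S_INR in Hx. rewrite Rabs_left; lra.
Qed.

(* [E|X - np| <= (npq/s + s)/2] for every [s > 0], from [|y| <= (y^2/s + s)/2]. *)
Lemma mean_abs_dev_upper n p s : 0 <= p <= 1 -> 0 < s ->
  sumr (fun x => Rabs (INR x - INR n * p) * pmf n p x) (S n) <= (INR n * p * (1 - p) / s + s) / 2.
Proof.
  intros Hp Hs.
  apply (Rle_trans _ (sumr (fun x => / 2 * (/ s * ((INR x - INR n * p) ^ 2 * pmf n p x) + s * pmf n p x)) (S n))).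
  2:{ rewrite sumr_scal, sumr_plus, !sumr_scal, pmf_variance, pmf_sum. right. field. lra. }
  apply sumr_le. intros i _. assert (HB := pmf_nonneg n p i Hp).
  set (y := INR i - INR n * p).
  assert (Rabs y <= / 2 * (/ s * y ^ 2 + s)).
  { rewrite <- (pow2_abs y). assert (0 <= Rabs y) by apply Rabs_pos.
    assert (0 <= (Rabs y - s) ^ 2) by apply pow2_ge_0.
    apply (Rmult_le_reg_l (2 * s)); [lra|].
    replace (2 * s * (/ 2 * (/ s * Rabs y ^ 2 + s))) with (Rabs y ^ 2 + s * s) by (field; lra). nra. }
  replace (/ 2 * (/ s * (y ^ 2 * pmf n p i) + s * pmf n p i)) with (/ 2 * (/ s * y ^ 2 + s) * pmf n p i) by ring.
  apply Rmult_le_compat_r; lra.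
Qed.

(* [ratio n p a = P(X = a+1) / P(X = a)] for [X ~ Bin(n,p)]. *)
Definition ratio (n : nat) (p : R) (a : nat) : R :=
  (INR n - INR a) * p / ((INR a + 1) * (1 - p)).

Lemma pmf_ratio n p a : (a < n)%nat -> p < 1 -> pmf n p (S a) = pmf n p a * ratio n p a.
Proof.
  intros H Hp. unfold pmf, ratio. rewrite pascal_step3 by auto. rewrite minus_INR by lia.
  replace (n - a)%nat with (S (n - S a)) by lia. rewrite S_INR. simpl pow.
  field. split; [lra|]. assert (0 <= INR a) by apply pos_INR. lra.
Qed.

Lemma pmf_pascal m p b : (b < m)%nat ->
  (INR (S b) - INR (S m) * p) * pmf (S m) p (S b) =
  INR (S m) * p * (1 - p) * (pmf m p b - pmf m p (S b)).
Proof.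
  intros H. unfold pmf. rewrite <- pascal by auto.
  assert (HC := C_absorb m b ltac:(lia)).
  replace (S m - S b)%nat with (m - b)%nat by lia.
  replace (m - b)%nat with (S (m - S b)) by lia. simpl pow.
  transitivity ((INR (S b) * Binomial.C (S m) (S b)) * (p * p ^ b * ((1 - p) * (1 - p) ^ (m - S b)))
    - INR (S m) * p * (Binomial.C m b + Binomial.C m (S b)) * (p * p ^ b * ((1 - p) * (1 - p) ^ (m - S b)))).
  - rewrite <- pascal by auto. ring.
  - rewrite HC. ring.
Qed.

Lemma pmf_as_centered_tail m p a : (a <= m)%nat ->
  INR (S m) * p * (1 - p) * pmf m p a =
  tail (S m) (fun x => (INR x - INR (S m) * p) * pmf (S m) p x) (S a).
Proof.
  set (F := fun x => (INR x - INR (S m) * p) * pmf (S m) p x).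
  (* Descending induction on [a], from [a = m] down. *)
  intros Ha. remember (m - a)%nat as d. replace a with (m - d)%nat by lia. clear a Ha Heqd.
  induction d as [|d IH].
  - rewrite Nat.sub_0_r. assert (E := tail_step (S m) F (S m) ltac:(lia)).
    rewrite (tail_beyond (S m) F (S (S m))), Rminus_0_r in E by lia.
    rewrite E. unfold F, pmf. rewrite !Nat.sub_diag, S_INR. simpl pow.
    unfold Binomial.C. rewrite !Nat.sub_diag.
    field. repeat split; apply INR_fact_neq_0.
  - destruct (Compare_dec.le_lt_dec m d) as [Hd|Hd].
    { replace (m - S d)%nat with (m - d)%nat by lia. exact IH. }
    set (b := (m - S d)%nat). replace (m - d)%nat with (S b) in IH by lia.
    assert (E := tail_step (S m) F (S b) ltac:(lia)).
    unfold F at 3 in E. rewrite pmf_pascal, <- IH in E by lia. lra.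
Qed.

Lemma derive_pmf n x u : 0 < u < 1 -> (x <= n)%nat ->
  is_derive (fun t => pmf n t x) u ((INR x - INR n * u) / (u * (1 - u)) * pmf n u x).
Proof.
  intros Hu Hx. unfold pmf. auto_derive; auto.
  rewrite minus_INR by auto.
  assert (E1 : INR x * u ^ Init.Nat.pred x = INR x * u ^ x / u).
  { destruct x; simpl; field; lra. }
  assert (E2 : (INR n - INR x) * (1 + - u) ^ Init.Nat.pred (n - x)
               = (INR n - INR x) * (1 - u) ^ (n - x) / (1 - u)).
  { destruct (n - x)%nat eqn:E.
    - replace (INR n - INR x) with 0 by (rewrite <- minus_INR, E by lia; simpl; ring).
      field; lra.
    - simpl. replace (1 + - u) with (1 - u) by ring. field. lra. }
  rewrite Rmult_1_l, E1, Ropp_mult_distr_l_reverse, Rmult_1_l, E2.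
  replace (1 + - u) with (1 - u) by ring. field. lra.
Qed.

Lemma is_derive_sumr (f : R -> nat -> R) df u N :
  (forall x, (x < N)%nat -> is_derive (fun t => f t x) u (df x)) ->
  is_derive (fun t => sumr (f t) N) u (sumr df N).
Proof.
  induction N as [|N IH]; intros H; simpl; [exact (is_derive_const (0:R) u)|].
  apply (is_derive_plus (fun t => sumr (f t) N) (fun t => f t N)).
  - apply IH. intros; apply H; lia.
  - apply H; lia.
Qed.

Lemma derive_ptail n k u : 0 < u < 1 -> (1 <= k <= n)%nat ->
  is_derive (fun t => ptail n t k) u (INR n * pmf (n - 1) u (k - 1)).
Proof.
  intros Hu Hk. destruct n as [|m]; [lia|]. destruct k as [|a]; [lia|].
  replace (S m - 1)%nat with m by lia. replace (S a - 1)%nat with a by lia.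
  replace (INR (S m) * pmf m u a)
    with (/ (u * (1 - u)) * tail (S m) (fun x => (INR x - INR (S m) * u) * pmf (S m) u x) (S a))
    by (rewrite <- pmf_as_centered_tail by lia; field; nra).
  unfold ptail, tail. rewrite <- sumr_scal.
  apply (is_derive_sumr (fun t x => if Nat.leb (S a) x then pmf (S m) t x else 0)).
  intros x Hx. destruct (Nat.leb (S a) x).
  - replace (/ (u * (1 - u)) * ((INR x - INR (S m) * u) * pmf (S m) u x))
      with ((INR x - INR (S m) * u) / (u * (1 - u)) * pmf (S m) u x) by (field; lra).
    apply derive_pmf; auto; lia.
  - rewrite Rmult_0_r. exact (is_derive_const (0:R) u).
Qed.

Lemma nat_floor x : 0 <= x -> exists k : nat, INR k <= x < INR k + 1.
Proof.
  intros Hx. destruct (archimed x) as [H1 H2].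
  assert (Hu : (0 < up x)%Z) by (apply lt_IZR; lra).
  exists (Z.to_nat (up x - 1)). rewrite INR_IZR_INZ, Znat.Z2Nat.id by lia.
  rewrite minus_IZR. simpl. lra.
Qed.

Lemma pmf_upper n p a : 0 < p < 1 -> (a <= n)%nat -> (1 <= n)%nat ->
  pmf n p a <= / sqrt (INR n * p * (1 - p)).
Proof.
  intros Hp Ha Hn.
  assert (Hn0 : 0 < INR n) by (apply lt_0_INR; lia).
  assert (Hpq : 0 < p * (1 - p)) by nra.
  set (v := INR (S n) * p * (1 - p)).
  assert (Hv : INR n * p * (1 - p) <= v) by (unfold v; rewrite S_INR; nra).
  assert (Hs : 0 < sqrt (INR n * p * (1 - p))) by (apply sqrt_lt_R0; nra).
  assert (Hss := sqrt_sqrt v ltac:(nra)).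
  (* [v P(Y = a) <= E|X - (n+1)p| <= sqrt v], with [X ~ Bin(n+1,p)]. *)
  assert (Hmass : v * pmf n p a <= sqrt v).
  { unfold v. rewrite pmf_as_centered_tail by auto.
    apply (Rle_trans _ (sumr (fun x => Rabs (INR x - INR (S n) * p) * pmf (S n) p x) (S (S n)))).
    - apply sumr_le. intros i _. assert (HB := pmf_nonneg (S n) p i ltac:(lra)).
      destruct (Nat.leb (S a) i).
      + apply Rmult_le_compat_r; [lra|apply RRle_abs].
      + apply Rmult_le_pos; [apply Rabs_pos|lra].
    - eapply Rle_trans; [apply (mean_abs_dev_upper _ _ (sqrt v)); [lra|apply sqrt_lt_R0; nra]|].
      fold v. replace (v / sqrt v) with (sqrt v * sqrt v / sqrt v) by now rewrite Hss.
      right. field. apply Rgt_not_eq, sqrt_lt_R0. nra. }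
  assert (Hmono : sqrt (INR n * p * (1 - p)) <= sqrt v) by (apply sqrt_le_1_alt; lra).
  apply (Rle_trans _ (/ sqrt v)); [|apply Rinv_le_contravar; lra].
  apply (Rmult_le_reg_l v); [nra|].
  replace (v * / sqrt v) with (sqrt v * sqrt v * / sqrt v) by now rewrite Hss.
  replace (sqrt v * sqrt v * / sqrt v) with (sqrt v) by (field; lra). lra.
Qed.

Lemma mean_abs_dev_lower n p : 0 < p < 1 -> (1 <= n)%nat ->
  4 <= sqrt (INR n * p * (1 - p)) ->
  sqrt (INR n * p * (1 - p)) / 8 - 1 / 2 <=
  sumr (fun x => Rabs (INR x - INR n * p) * pmf n p x) (S n).
Proof.
  intros Hp Hn Hs4. set (s := sqrt (INR n * p * (1 - p))) in *.
  assert (Hn0 : 0 < INR n) by (apply lt_0_INR; lia).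
  assert (Hpq : 0 < p * (1 - p)) by nra.
  assert (Hss : s * s = INR n * p * (1 - p)) by (apply sqrt_sqrt; nra).
  set (T := s / 4 - 1). assert (HT : 0 <= T) by (unfold T; lra).
  destruct (nat_floor (INR n * p - T)) as [a0 Ha0]; [unfold T; nra|].
  destruct (nat_floor (2 * T + 2)) as [d Hd]; [unfold T; lra|].
  (* The window [a0, a0 + d) covers [np - T, np + T] and has mass <= 1/2. *)
  set (w := fun x => (if Nat.leb a0 x then 1 else 0) - (if Nat.leb (a0 + d) x then 1 else 0)).
  assert (Hwin : sumr (fun x => w x * pmf n p x) (S n) <= 1 / 2).
  { replace (sumr (fun x => w x * pmf n p x) (S n)) with (ptail n p a0 - ptail n p (a0 + d)).
    2:{ unfold ptail, tail. rewrite <- sumr_minus. apply sumr_ext. intros i _. unfold w.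
        destruct (Nat.leb a0 i), (Nat.leb (a0 + d) i); ring. }
    assert (HM : forall x, (x <= n)%nat -> 0 <= pmf n p x <= / s)
      by (intros; split; [apply pmf_nonneg; lra|apply pmf_upper; auto]).
    assert (D := tail_window_bound n (pmf n p) (/ s) a0 d
                   ltac:(left; apply Rinv_0_lt_compat; lra) HM).
    assert (INR d * / s <= 1 / 2).
    { apply (Rmult_le_reg_l s); [lra|]. replace (s * (INR d * / s)) with (INR d) by (field; lra).
      unfold T in Hd. lra. }
    unfold ptail. lra. }
  apply (Rle_trans _ (sumr (fun x => T * (1 - w x) * pmf n p x) (S n))).
  - rewrite (sumr_ext _ (fun x => T * pmf n p x - T * (w x * pmf n p x))) by (intros; ring).
    rewrite sumr_minus, !sumr_scal, pmf_sum.
    assert (T * (1 / 2) <= T * (1 - sumr (fun x => w x * pmf n p x) (S n)))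
      by (apply Rmult_le_compat_l; lra).
    unfold T in *. lra.
  - apply sumr_le. intros x _. assert (HB := pmf_nonneg n p x ltac:(lra)).
    apply Rmult_le_compat_r; [auto|]. unfold w.
    destruct (Nat.leb_spec a0 x) as [H1|H1], (Nat.leb_spec (a0 + d) x) as [H2|H2].
    + apply le_INR in H2. rewrite plus_INR in H2. rewrite Rabs_right; lra.
    + assert (0 <= Rabs (INR x - INR n * p)) by apply Rabs_pos. lra.
    + lia.
    + apply lt_INR in H1. rewrite Rabs_left; lra.
Qed.

Lemma centered_tail_lower n p k L : 0 <= p <= 1 -> Rabs (INR k - INR n * p) <= L ->
  sumr (fun x => Rabs (INR x - INR n * p) * pmf n p x) (S n) / 2 - L <=
  tail n (fun x => (INR x - INR n * p) * pmf n p x) k.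
Proof.
  intros Hp Hk. apply Rabs_le_between in Hk.
  apply (Rle_trans _ (sumr (fun x =>
    ((Rabs (INR x - INR n * p) + (INR x - INR n * p)) / 2 - L) * pmf n p x) (S n))).
  - rewrite (sumr_ext (fun x => ((Rabs (INR x - INR n * p) + (INR x - INR n * p)) / 2 - L) * pmf n p x)
      (fun x => / 2 * (Rabs (INR x - INR n * p) * pmf n p x)
                + / 2 * ((INR x - INR n * p) * pmf n p x) - L * pmf n p x)) by (intros; field).
    rewrite sumr_minus, sumr_plus, !sumr_scal, pmf_centered, pmf_sum. lra.
  - unfold tail. apply sumr_le. intros x _. assert (HB := pmf_nonneg n p x Hp).
    set (y := INR x - INR n * p).
    assert (Hy : Rabs y + y = 0 /\ y < 0 \/ Rabs y = y /\ 0 <= y).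
    { destruct (Rle_dec 0 y); [right; rewrite Rabs_right|left; rewrite Rabs_left]; lra. }
    destruct (Nat.leb_spec k x) as [Hx|Hx]; [apply le_INR in Hx|apply lt_INR in Hx];
      unfold y in *; destruct Hy as [[Hy Hs]|[Hy Hs]]; rewrite ?Hy; nra.
Qed.

Lemma pmf_lower_near_mean m p a L : 0 < p < 1 -> (a <= m)%nat ->
  4 <= sqrt (INR (S m) * p * (1 - p)) -> Rabs (INR (S a) - INR (S m) * p) <= L ->
  sqrt (INR (S m) * p * (1 - p)) / 16 - 1 / 4 - L <= INR (S m) * p * (1 - p) * pmf m p a.
Proof.
  intros Hp Ha Hs Hk. rewrite pmf_as_centered_tail by auto.
  assert (H1 := mean_abs_dev_lower (S m) p Hp ltac:(lia) Hs).
  assert (H2 := centered_tail_lower (S m) p (S a) L ltac:(lra) Hk). lra.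
Qed.

(** Probabilities far from the mean are small: beyond the mean the
    probabilities decrease, so a single one is controlled by a Chebyshev tail
    bound divided by the length of the gap. *)

Lemma pmf_symmetry n u a : (a <= n)%nat -> pmf n u a = pmf n (1 - u) (n - a).
Proof.
  intros H. unfold pmf. rewrite (pascal_step1 n a H).
  replace (n - (n - a))%nat with a by lia. replace (1 - (1 - u)) with u by ring. ring.
Qed.

Lemma pmf_decreasing_above_mean n u x j : 0 < u < 1 -> INR n * u <= INR x ->
  (x + j <= n)%nat -> pmf n u (x + j) <= pmf n u x.
Proof.
  intros Hu Hx. induction j as [|j IH]; intros Hj; [rewrite Nat.add_0_r; lra|].
  replace (x + S j)%nat with (S (x + j)) by lia. rewrite pmf_ratio by (lia || lra).
  assert (HB := pmf_nonneg n u (x + j) ltac:(lra)).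
  assert (Hxj : INR x <= INR (x + j)) by (apply le_INR; lia).
  assert (Hjn : INR (x + j) + 1 <= INR n) by (rewrite <- S_INR; apply le_INR; lia).
  assert (Hq : 0 < (INR (x + j) + 1) * (1 - u)) by (assert (0 <= INR (x + j)) by apply pos_INR; nra).
  assert (Hr : 0 <= ratio n u (x + j) <= 1).
  { unfold ratio. split.
    - apply Rmult_le_pos; [nra|left; apply Rinv_0_lt_compat; lra].
    - apply (Rmult_le_reg_l ((INR (x + j) + 1) * (1 - u))); [lra|].
      unfold Rdiv. rewrite Rmult_comm, Rmult_assoc, Rinv_l, Rmult_1_r by lra. nra. }
  assert (IH' := IH ltac:(lia)). nra.
Qed.

Lemma pmf_gap_bound n u a0 a : 0 < u < 1 -> INR n * u <= INR a0 -> (a0 <= a <= n)%nat ->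
  INR (a - a0) * pmf n u a <= ptail n u a0.
Proof.
  intros Hu Ha0 Ha. set (d := (a - a0)%nat).
  assert (W := tail_window n (pmf n u) a0 d ltac:(unfold d; lia)).
  replace (a0 + d)%nat with a in W by (unfold d; lia).
  assert (Ra := ptail_range n u a ltac:(lra)). unfold ptail in *.
  enough (INR d * pmf n u a <= sumr (fun j => pmf n u (a0 + j)) d) by lra.
  rewrite <- sumr_const. apply sumr_le. intros j Hj.
  replace a with ((a0 + j) + (d - j))%nat at 1 by (unfold d in *; lia).
  apply pmf_decreasing_above_mean; [auto| |unfold d in *; lia].
  apply (Rle_trans _ (INR a0)); [auto|apply le_INR; lia].
Qed.

Lemma pmf_far_above n u d a : 0 < u < 1 -> 0 < d -> (a <= n)%nat ->
  INR n * u + INR n * d <= INR a -> 8 <= INR n * d ->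
  pmf n u a <= 8 / (INR n ^ 2 * d ^ 3).
Proof.
  intros Hu Hd Ha Hfar Hbig.
  assert (Hn : 0 < INR n) by nra.
  assert (Hnu : 0 <= INR n * u) by nra.
  destruct (nat_floor (INR n * u + INR n * d / 2)) as [a0 Ha0]; [nra|].
  assert (Ha0a : (a0 <= a)%nat) by (apply INR_le; nra).
  assert (Hgap : INR n * d / 2 <= INR (a - a0)) by (rewrite minus_INR by auto; nra).
  assert (G := pmf_gap_bound n u a0 a Hu ltac:(nra) ltac:(lia)).
  assert (C := ptail_upper_chebyshev n u a0 (INR n * d / 4) ltac:(lra) ltac:(nra) ltac:(nra)).
  assert (Hvar : INR n * u * (1 - u) / (INR n * d / 4) ^ 2 <= 4 / (INR n * d ^ 2)).
  { replace (INR n * u * (1 - u) / (INR n * d / 4) ^ 2)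
      with (16 * (u * (1 - u)) * / (INR n * d ^ 2)) by (field; nra).
    assert (u * (1 - u) <= 1 / 4) by (assert (0 <= (u - 1 / 2) ^ 2) by apply pow2_ge_0; nra).
    unfold Rdiv. apply Rmult_le_compat_r; [left; apply Rinv_0_lt_compat; nra|lra]. }
  assert (HB := pmf_nonneg n u a ltac:(lra)).
  assert (Hprod : INR n * d / 2 * pmf n u a <= 4 / (INR n * d ^ 2)).
  { apply (Rle_trans _ (INR (a - a0) * pmf n u a)); [apply Rmult_le_compat_r|]; lra. }
  apply (Rmult_le_reg_l (INR n * d / 2)); [nra|].
  replace (INR n * d / 2 * (8 / (INR n ^ 2 * d ^ 3))) with (4 / (INR n * d ^ 2)) by (field; nra).
  lra.
Qed.

(* Both sides, by the symmetry [k |-> n - k], [u |-> 1 - u]. *)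
Lemma pmf_far n u d a : 0 < u < 1 -> 0 < d -> (a <= n)%nat ->
  INR n * d <= Rabs (INR a - INR n * u) -> 8 <= INR n * d ->
  pmf n u a <= 8 / (INR n ^ 2 * d ^ 3).
Proof.
  intros Hu Hd Ha Hfar Hbig.
  destruct (Rle_dec 0 (INR a - INR n * u)) as [Hs|Hs].
  - rewrite Rabs_right in Hfar by lra. apply pmf_far_above; auto. lra.
  - rewrite Rabs_left in Hfar by lra. rewrite pmf_symmetry by auto.
    apply pmf_far_above; auto; try lra; try lia. rewrite minus_INR by auto. lra.
Qed.

(** Near the mode [c = floor(np)] the distribution is almost symmetric:
    [P(X = c + d) / P(X = c - d)] is a product of [d] factors
    [ratio(c+i) ratio(c-1-i)], each within [mode_error n p J] of [1]. *)

Fixpoint prodr (f : nat -> R) (d : nat) : R :=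
  match d with O => 1 | S d' => prodr f d' * f d' end.

Lemma prodr_near_one f e d : 0 <= e -> (forall i, (i < d)%nat -> Rabs (f i - 1) <= e) ->
  Rabs (prodr f d - 1) <= (1 + e) ^ d - 1.
Proof.
  intros He. induction d as [|d IH]; intros H; simpl.
  { rewrite Rminus_diag, Rabs_R0. lra. }
  assert (IHd := IH ltac:(intros; apply H; lia)). assert (Hd := H d ltac:(lia)).
  replace (prodr f d * f d - 1) with ((prodr f d - 1) * f d + (f d - 1)) by ring.
  eapply Rle_trans; [apply Rabs_triang|]. rewrite Rabs_mult.
  assert (Rabs (f d) <= 1 + e).
  { replace (f d) with ((f d - 1) + 1) by ring.
    eapply Rle_trans; [apply Rabs_triang|]. rewrite Rabs_R1. lra. }
  assert (Rabs (prodr f d - 1) * Rabs (f d) <= ((1 + e) ^ d - 1) * (1 + e))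
    by (apply Rmult_le_compat; auto; apply Rabs_pos).
  lra.
Qed.

Lemma pow_one_plus_mul_le e d : 0 <= e -> (1 + e) ^ d * (1 - INR d * e) <= 1.
Proof.
  intros He. induction d as [|d IH]; [simpl; lra|].
  rewrite S_INR. simpl pow.
  assert (0 <= (1 + e) ^ d) by (apply pow_le; lra).
  assert (0 <= INR d) by apply pos_INR.
  assert (0 <= (1 + e) ^ d * (INR d * e * e + e * e)) by (apply Rmult_le_pos; nra).
  nra.
Qed.

Lemma prodr_near_one_linear f e d : 0 <= e -> INR d * e <= 1 / 2 ->
  (forall i, (i < d)%nat -> Rabs (f i - 1) <= e) ->
  Rabs (prodr f d - 1) <= 2 * INR d * e.
Proof.
  intros He Hde H. eapply Rle_trans; [apply prodr_near_one; eauto|].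
  assert (Hb := pow_one_plus_mul_le e d He).
  assert (0 <= INR d * e) by (apply Rmult_le_pos; [apply pos_INR|lra]).
  assert (0 <= (1 + e) ^ d) by (apply pow_le; lra).
  (* [(1+e)^d <= 1/(1 - d e) <= 1 + 2 d e] since [d e <= 1/2]. *)
  assert (1 <= (1 - INR d * e) * (1 + 2 * INR d * e)) by nra.
  assert ((1 + e) ^ d * 1 <= (1 + e) ^ d * ((1 - INR d * e) * (1 + 2 * INR d * e)))
    by (apply Rmult_le_compat_l; auto).
  assert ((1 + e) ^ d * (1 - INR d * e) * (1 + 2 * INR d * e) <= 1 * (1 + 2 * INR d * e))
    by (apply Rmult_le_compat_r; nra).
  nra.
Qed.

Lemma pmf_mirror n p c d : p < 1 -> (d <= c)%nat -> (c + d <= n)%nat ->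
  pmf n p (c + d) = pmf n p (c - d) * prodr (fun i => ratio n p (c + i) * ratio n p (c - 1 - i)) d.
Proof.
  intros Hp. induction d as [|d IH]; intros H1 H2.
  { simpl. rewrite Nat.add_0_r, Nat.sub_0_r. ring. }
  simpl prodr. replace (c + S d)%nat with (S (c + d)) by lia.
  rewrite pmf_ratio, IH by (lia || lra).
  replace (c - d)%nat with (S (c - S d)) by lia. rewrite pmf_ratio by (lia || lra).
  replace (c - 1 - d)%nat with (c - S d)%nat by lia. ring.
Qed.

Definition mode_error (n : nat) (p : R) (J : nat) : R :=
  4 * (INR n + 3 + 2 * INR J ^ 2) / (p ^ 2 * (1 - p) ^ 2 * INR n ^ 2).

Lemma mode_error_nonneg n p J : 0 < p < 1 -> (1 <= n)%nat -> 0 <= mode_error n p J.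
Proof.
  intros Hp Hn. assert (0 < INR n) by (apply lt_0_INR; lia). unfold mode_error.
  apply Rmult_le_pos; [assert (0 <= INR J ^ 2) by apply pow2_ge_0; lra|].
  left. apply Rinv_0_lt_compat. repeat apply Rmult_lt_0_compat; try apply pow_lt; lra.
Qed.

(* The numerator of [ratio(c+i) ratio(c-1-i) - 1], with [delta = c - np]. *)
Lemma mode_numerator_bound x p delta i : 0 < p < 1 -> -1 < delta <= 0 -> 0 <= x -> 0 <= i ->
  Rabs (- delta * (2 * x * p * (1 - p) + ((1 - p) - p) * delta) + x * p * (1 - p) * (p - (1 - p))
        - delta * (p ^ 2 + (1 - p) ^ 2) - (i + i ^ 2) * (p - (1 - p))) <= x + 3 + 2 * i ^ 2.
Proof.
  intros Hp Hd Hx Hi.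
  assert (p * (1 - p) <= 1 / 4) by (assert (0 <= (p - 1 / 2) ^ 2) by apply pow2_ge_0; nra).
  set (w := x * p * (1 - p)).
  assert (0 <= w <= x / 4)
    by (unfold w; rewrite Rmult_assoc; split; [apply Rmult_le_pos|]; nra).
  replace (2 * x * p * (1 - p)) with (2 * w) by (unfold w; ring).
  replace (x * p * (1 - p) * (p - (1 - p))) with (w * (p - (1 - p))) by (unfold w; ring).
  assert (0 <= - delta * (2 * w) <= 2 * w) by nra.
  assert (-1 <= - delta * ((1 - p - p) * delta) <= 1) by nra.
  assert (- w <= w * (p - (1 - p)) <= w) by nra.
  assert (0 <= - delta * (p ^ 2 + (1 - p) ^ 2) <= 1) by nra.
  assert (- (i + i ^ 2) <= (i + i ^ 2) * (p - (1 - p)) <= i + i ^ 2) by nra.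
  assert (i <= 1 + i ^ 2) by nra.
  apply Rabs_le. split; nra.
Qed.

Lemma ratio_pair_near_one n p c i J : 0 < p < 1 -> INR c <= INR n * p < INR c + 1 ->
  (i < J)%nat -> (J <= c)%nat -> INR J + 1 <= INR n * p / 2 ->
  Rabs (ratio n p (c + i) * ratio n p (c - 1 - i) - 1) <= mode_error n p J.
Proof.
  intros Hp Hc Hi HJc HJ.
  assert (E1 : INR (c + i) = INR c + INR i) by apply plus_INR.
  assert (E2 : INR (c - 1 - i) = INR c - 1 - INR i) by (rewrite !minus_INR by lia; simpl; ring).
  assert (HiJ : INR i + 1 <= INR J) by (rewrite <- S_INR; apply le_INR; lia).
  assert (Hi0 : 0 <= INR i) by apply pos_INR.
  assert (Hnp : 0 < INR n * p) by (assert (0 <= INR J) by apply pos_INR; lra).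
  assert (Hn : 0 < INR n) by nra.
  unfold ratio, mode_error. rewrite E1, E2.
  set (ci := INR c) in *. set (ii := INR i) in *. set (delta := ci - INR n * p).
  set (Num := p ^ 2 * (INR n - ci - ii) * (INR n - ci + 1 + ii)).
  set (Den := (1 - p) ^ 2 * (ci + ii + 1) * (ci - ii)).
  (* Both factors of [Den] are at least [np/2]. *)
  assert (HDen : (1 - p) ^ 2 * ((INR n * p / 2) * (INR n * p / 2)) <= Den).
  { unfold Den. rewrite Rmult_assoc. apply Rmult_le_compat_l; [apply pow_le; lra|].
    apply Rmult_le_compat; lra. }
  assert (HDp : 0 < (1 - p) ^ 2 * ((INR n * p / 2) * (INR n * p / 2)))
    by (apply Rmult_lt_0_compat; [apply pow_lt|]; nra).
  replace ((INR n - (ci + ii)) * p / ((ci + ii + 1) * (1 - p))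
           * ((INR n - (ci - 1 - ii)) * p / ((ci - 1 - ii + 1) * (1 - p))) - 1)
    with ((Num - Den) / Den) by (unfold Num, Den; field; repeat split; lra).
  replace (Num - Den) with (- delta * (2 * INR n * p * (1 - p) + ((1 - p) - p) * delta)
    + INR n * p * (1 - p) * (p - (1 - p)) - delta * (p ^ 2 + (1 - p) ^ 2)
    - (ii + ii ^ 2) * (p - (1 - p))) by (unfold Num, Den, delta; ring).
  unfold Rdiv. rewrite Rabs_mult, (Rabs_right (/ Den)) by (left; apply Rinv_0_lt_compat; lra).
  assert (NB := mode_numerator_bound (INR n) p delta ii Hp ltac:(unfold delta; lra) ltac:(lra) Hi0).
  assert (ii ^ 2 <= INR J ^ 2) by (apply pow_incr; lra).
  apply (Rle_trans _ ((INR n + 3 + 2 * INR J ^ 2) * / Den)).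
  { apply Rmult_le_compat_r; [left; apply Rinv_0_lt_compat|]; lra. }
  apply (Rle_trans _ ((INR n + 3 + 2 * INR J ^ 2) * / ((1 - p) ^ 2 * ((INR n * p / 2) * (INR n * p / 2))))).
  { apply Rmult_le_compat_l; [assert (0 <= INR J ^ 2) by apply pow2_ge_0; lra|].
    apply Rinv_le_contravar; auto. }
  right. field. split; lra.
Qed.

Lemma mode_window_symmetry n p c J : 0 < p < 1 -> (1 <= n)%nat ->
  INR c <= INR n * p < INR c + 1 -> (J <= c)%nat -> (c + J <= n)%nat ->
  INR J + 1 <= INR n * p / 2 -> INR J * mode_error n p J <= 1 / 2 ->
  Rabs (sumr (fun j => pmf n p (S c + j)) J - sumr (fun j => pmf n p (c - 1 - j)) J)
    <= 2 * INR J * mode_error n p J.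
Proof.
  intros Hp Hn Hc HJc HJn HJ Hsmall. set (e := mode_error n p J) in *.
  assert (He := mode_error_nonneg n p J Hp Hn). fold e in He.
  rewrite <- sumr_minus. eapply Rle_trans; [apply sumr_abs|].
  apply (Rle_trans _ (sumr (fun j => (2 * INR J * e) * pmf n p (c - 1 - j)) J)).
  - apply sumr_le. intros j Hj.
    assert (Hm := pmf_mirror n p c (S j) ltac:(lra) ltac:(lia) ltac:(lia)).
    replace (c + S j)%nat with (S c + j)%nat in Hm by lia.
    replace (c - S j)%nat with (c - 1 - j)%nat in Hm by lia.
    rewrite Hm. assert (HB := pmf_nonneg n p (c - 1 - j) ltac:(lra)).
    set (P := prodr (fun i => ratio n p (c + i) * ratio n p (c - 1 - i)) (S j)).
    replace (pmf n p (c - 1 - j) * P - pmf n p (c - 1 - j)) with (pmf n p (c - 1 - j) * (P - 1)) by ring.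
    rewrite Rabs_mult, Rabs_right, Rmult_comm by lra. apply Rmult_le_compat_r; [auto|].
    assert (HSj : INR (S j) * e <= INR J * e) by (apply Rmult_le_compat_r; [|apply le_INR]; lia || lra).
    eapply Rle_trans; [apply (prodr_near_one_linear _ e); [auto|lra|]|lra].
    intros i Hi. apply ratio_pair_near_one; auto; lia.
  - (* The lower window has mass at most 1. *)
    rewrite sumr_scal.
    assert (W := tail_window n (pmf n p) (c - J) J ltac:(lia)).
    replace (c - J + J)%nat with c in W by lia.
    rewrite sumr_rev, (sumr_ext _ (fun j => pmf n p (c - 1 - j))) in W by (intros; f_equal; lia).
    assert (R1 := ptail_range n p (c - J) ltac:(lra)). assert (R2 := ptail_range n p c ltac:(lra)).
    assert (0 <= 2 * INR J * e) by (assert (0 <= INR J) by apply pos_INR; nra).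
    unfold ptail in *. nra.
Qed.

Lemma ptail_mode_symmetry n p c J : 0 < p < 1 -> (1 <= n)%nat -> INR c <= INR n * p < INR c + 1 ->
  (1 <= J)%nat -> (J <= c)%nat -> (c + J <= n)%nat -> INR J + 1 <= INR n * p / 2 ->
  INR J * mode_error n p J <= 1 / 2 ->
  Rabs (ptail n p (S c) - (1 - ptail n p c)) <=
    2 * INR J * mode_error n p J + 2 * (INR n * p * (1 - p) / INR J ^ 2).
Proof.
  intros Hp Hn Hc HJ1 HJc HJn HJ Hsmall.
  assert (HJ0 : 1 <= INR J) by (apply (le_INR 1); auto).
  assert (Pair := mode_window_symmetry n p c J Hp Hn Hc HJc HJn HJ Hsmall).
  assert (W1 := tail_window n (pmf n p) (S c) J ltac:(lia)).
  assert (W2 := tail_window n (pmf n p) (c - J) J ltac:(lia)).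
  replace (c - J + J)%nat with c in W2 by lia.
  rewrite sumr_rev, (sumr_ext _ (fun j => pmf n p (c - 1 - j))) in W2 by (intros; f_equal; lia).
  (* Beyond the windows, Chebyshev's inequality applies. *)
  assert (T1 := ptail_upper_chebyshev n p (S c + J) (INR J) ltac:(lra) ltac:(lra)
                  ltac:(rewrite plus_INR, S_INR; lra)).
  assert (T2 := ptail_lower_chebyshev n p (c - J) (INR J) ltac:(lra) ltac:(lra)
                  ltac:(rewrite minus_INR by lia; lra)).
  assert (R1 := ptail_range n p (S c + J) ltac:(lra)).
  assert (R2 := ptail_range n p (c - J) ltac:(lra)).
  unfold ptail in *. apply Rabs_le_between in Pair. apply Rabs_le. lra.
Qed.

Lemma eventually_INR_ge c : eventually (fun n => c <= INR n).
Proof.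
  destruct (nat_floor (Rmax c 0)) as [k Hk]; [apply Rmax_r|].
  exists (S k). intros n Hn. apply le_INR in Hn. rewrite S_INR in Hn.
  assert (c <= Rmax c 0) by apply Rmax_l. lra.
Qed.

Lemma eventually_sqrt_ge q c : 0 < q -> eventually (fun n => c <= sqrt (INR n * q)).
Proof.
  intros Hq. set (b := Rmax c 0).
  assert (c <= b) by apply Rmax_l. assert (0 <= b) by apply Rmax_r.
  generalize (eventually_INR_ge (b * b / q)). apply filter_imp. intros n Hn.
  assert (b * b <= INR n * q).
  { apply (Rmult_le_compat_r q) in Hn; [|lra]. unfold Rdiv in Hn.
    rewrite Rmult_assoc, Rinv_l, Rmult_1_r in Hn by lra. lra. }
  apply (Rle_trans _ b); [auto|]. rewrite <- (sqrt_square b) by auto.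
  now apply sqrt_le_1_alt.
Qed.

Lemma is_lim_seq_of_bound v l :
  (forall eps, 0 < eps -> eventually (fun n => Rabs (v n - l) <= eps)) -> is_lim_seq v l.
Proof.
  intros H. apply is_lim_seq_spec. intros eps.
  generalize (H (eps / 2) ltac:(destruct eps; simpl; lra)). apply filter_imp.
  intros n Hn. destruct eps; simpl in *; lra.
Qed.

Lemma is_lim_seq_pinfty_of_bound v :
  (forall M, eventually (fun n => M <= v n)) -> is_lim_seq v p_infty.
Proof.
  intros H. apply is_lim_seq_spec. intros M.
  generalize (H (M + 1)). apply filter_imp. intros n Hn. lra.
Qed.

Lemma div_le_to_mul_le c d x : 0 < d -> c / d <= x -> c <= x * d.
Proof.
  intros Hd H. apply (Rmult_le_compat_r d) in H; [|lra].
  unfold Rdiv in H. rewrite Rmult_assoc, Rinv_l, Rmult_1_r in H by lra. exact H.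
Qed.

Lemma inv_le_of_mul_ge a eps : 0 < a -> 1 <= a * eps -> / a <= eps.
Proof.
  intros Ha H. apply (Rmult_le_reg_l a); [lra|]. rewrite Rinv_r by lra. exact H.
Qed.

Lemma div_le_swap c x eps : 0 < x -> 0 < eps -> c / eps <= x -> c / x <= eps.
Proof.
  intros Hx He H. apply div_le_to_mul_le in H; [|lra].
  apply (Rmult_le_reg_r x); [lra|]. unfold Rdiv. rewrite Rmult_assoc, Rinv_l by lra. lra.
Qed.

Lemma pq_le_quarter p : p * (1 - p) <= 1 / 4.
Proof. assert (0 <= (p - 1 / 2) ^ 2) by apply pow2_ge_0. nra. Qed.

Lemma chebyshev_linear_distance n u d : 0 < d -> 0 < INR n ->
  INR n * u * (1 - u) / (INR n * d) ^ 2 <= / (INR n * d ^ 2).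
Proof.
  intros Hd Hn.
  replace (INR n * u * (1 - u) / (INR n * d) ^ 2) with ((u * (1 - u)) * / (INR n * d ^ 2))
    by (field; nra).
  assert (0 < / (INR n * d ^ 2)) by (apply Rinv_0_lt_compat, Rmult_lt_0_compat; [|apply pow_lt]; lra).
  assert (Hq := pq_le_quarter u). nra.
Qed.

(** Away from [gamma]: thresholds [k n = n gamma + O(1)] with [gamma <> u] are
    at linear distance [n |gamma - u|] from the mean [n u]. *)

Section OffMean.

Variables (u gamma L : R) (k : nat -> nat).
Hypothesis Hu : 0 < u < 1.
Hypothesis Hne : u <> gamma.
Hypothesis HL : 0 <= L.
Hypothesis Hk : forall n, (1 <= n)%nat -> Rabs (INR (k n) - INR n * gamma) <= L.

Let d := Rabs (gamma - u) / 2.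

Lemma half_gap_pos : 0 < d.
Proof. unfold d. assert (0 < Rabs (gamma - u)) by (apply Rabs_pos_lt; lra). lra. Qed.

Lemma threshold_far n : (1 <= n)%nat ->
  (gamma < u /\ INR (k n) <= INR n * u - 2 * INR n * d + L) \/
  (u < gamma /\ INR n * u + 2 * INR n * d - L <= INR (k n)).
Proof.
  intros Hn. specialize (Hk n Hn). apply Rabs_le_between in Hk. unfold d.
  destruct (Rlt_dec gamma u); [left|right].
  - rewrite Rabs_left by lra. split; [lra|nra].
  - rewrite Rabs_right by lra. split; [lra|nra].
Qed.

Lemma ptail_limit_off_mean :
  is_lim_seq (fun n => ptail n u (k n)) (Finite (if Rlt_dec gamma u then 1 else 0)).
Proof.
  assert (Hd := half_gap_pos).
  apply is_lim_seq_of_bound. intros eps Heps.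
  generalize (filter_and _ _ (eventually_INR_ge 1)
               (filter_and _ _ (eventually_INR_ge (L / d)) (eventually_INR_ge (1 / (eps * d ^ 2))))).
  apply filter_imp. intros n (Hn1 & HnL & Hne2).
  assert (Hn : (1 <= n)%nat) by (apply (INR_le 1); auto).
  assert (HLd : L <= INR n * d) by (apply div_le_to_mul_le; lra).
  assert (Hd2 : 0 < d ^ 2) by (apply pow_lt; lra).
  assert (Hsmall : / (INR n * d ^ 2) <= eps).
  { apply inv_le_of_mul_ge; [nra|].
    apply div_le_to_mul_le in Hne2; [lra|nra]. }
  assert (Hcheb := chebyshev_linear_distance n u d Hd ltac:(lra)).
  assert (R := ptail_range n u (k n) ltac:(lra)).
  destruct (threshold_far n Hn) as [[Hlt Hfar]|[Hgt Hfar]].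
  - destruct (Rlt_dec gamma u) as [_|]; [|lra].
    assert (C := ptail_lower_chebyshev n u (k n) (INR n * d) ltac:(lra) ltac:(nra) ltac:(nra)).
    rewrite Rabs_left1 by lra. lra.
  - destruct (Rlt_dec gamma u) as [|_]; [lra|].
    assert (C := ptail_upper_chebyshev n u (k n) (INR n * d) ltac:(lra) ltac:(nra) ltac:(nra)).
    rewrite Rminus_0_r, Rabs_right by lra. lra.
Qed.

Lemma derivative_limit_off_mean : (forall n, (1 <= n)%nat -> (1 <= k n <= n)%nat) ->
  is_lim_seq (fun n => INR n * pmf (n - 1) u (k n - 1)) 0.
Proof.
  intros Hkn. assert (Hd := half_gap_pos).
  assert (Hd3 : 0 < d ^ 3) by (apply pow_lt; lra).
  apply is_lim_seq_of_bound. intros eps Heps.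
  generalize (filter_and _ _ (eventually_INR_ge (2 + 8 / d + (L + 1) / d + 16 / (eps * d ^ 3)))
                          (eventually_INR_ge 2)).
  apply filter_imp. intros n [Hbig Hn2].
  assert (Hn : (1 <= n)%nat) by (apply (INR_le 1); simpl; lra).
  set (m := (n - 1)%nat). set (a := (k n - 1)%nat).
  assert (Em : INR m = INR n - 1) by (unfold m; rewrite minus_INR by lia; simpl; ring).
  assert (Ea : INR a = INR (k n) - 1) by (specialize (Hkn n Hn); unfold a; rewrite minus_INR by lia; simpl; ring).
  assert (Hpos : 0 < 8 / d /\ 0 < (L + 1) / d /\ 0 < 16 / (eps * d ^ 3))
    by (repeat split; apply Rdiv_lt_0_compat; nra).
  assert (Hm8 : 8 <= INR m * d) by (apply div_le_to_mul_le; lra).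
  assert (HmL : L + 1 <= INR m * d) by (apply div_le_to_mul_le; lra).
  assert (Hfar : INR m * d <= Rabs (INR a - INR m * u)).
  { destruct (threshold_far n Hn) as [[_ Hf]|[_ Hf]];
      rewrite Em, Ea; [rewrite Rabs_left|rewrite Rabs_right]; nra. }
  assert (HB := pmf_far m u d a Hu Hd ltac:(specialize (Hkn n Hn); unfold a, m; lia) Hfar Hm8).
  assert (HB0 := pmf_nonneg m u a ltac:(lra)).
  rewrite Rminus_0_r, Rabs_right by (apply Rle_ge, Rmult_le_pos; [apply pos_INR|auto]).
  (* [n <= 2 m], so [n P(...) <= 16 / (m d^3) <= eps]. *)
  apply (Rle_trans _ (INR n * (8 / (INR m ^ 2 * d ^ 3)))); [apply Rmult_le_compat_l; [apply pos_INR|auto]|].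
  apply (Rle_trans _ (16 / (INR m * d ^ 3))).
  - replace (INR n * (8 / (INR m ^ 2 * d ^ 3))) with (INR n / INR m * (8 / (INR m * d ^ 3))) by (field; nra).
    replace (16 / (INR m * d ^ 3)) with (2 * (8 / (INR m * d ^ 3))) by (field; nra).
    apply Rmult_le_compat_r; [apply Rlt_le, Rdiv_lt_0_compat; nra|].
    apply (Rmult_le_reg_r (INR m)); [nra|]. unfold Rdiv. rewrite Rmult_assoc, Rinv_l by nra. nra.
  - apply (Rmult_le_reg_r (INR m * d ^ 3)); [nra|]. unfold Rdiv. rewrite Rmult_assoc, Rinv_l by nra.
    apply (Rmult_le_reg_r (/ eps)); [apply Rinv_0_lt_compat; lra|].
    replace (eps * (INR m * d ^ 3) * / eps) with (INR m * d ^ 3) by (field; lra).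
    replace (16 * 1 * / eps) with (16 / (eps * d ^ 3) * d ^ 3) by (field; nra).
    apply Rmult_le_compat_r; lra.
Qed.

End OffMean.

(** At [gamma]: thresholds [k n = n p + O(1)] sit at the mean, where the
    tails tend to [1/2] and the derivative blows up like [sqrt n]. *)

Section AtMean.

Variables (p L : R) (k : nat -> nat).
Hypothesis Hp : 0 < p < 1.
Hypothesis HL : 0 <= L.
Hypothesis Hk : forall n, (1 <= n)%nat -> Rabs (INR (k n) - INR n * p) <= L.

(* With [c] the mode and a window of [J] around it: the near-symmetry of the
   window, Chebyshev outside it, and [M]-Lipschitz tails with
   [M = 1/sqrt(npq)] to move from [c+1] to [k n]. *)
Lemma ptail_near_half n c J : (1 <= n)%nat -> INR c <= INR n * p < INR c + 1 ->
  (1 <= J)%nat -> (J <= c)%nat -> (c + J <= n)%nat -> INR J + 1 <= INR n * p / 2 ->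
  INR J * mode_error n p J <= 1 / 2 ->
  Rabs (ptail n p (k n) - 1 / 2) <=
    INR J * mode_error n p J + INR n * p * (1 - p) / INR J ^ 2
    + (L + 2) / sqrt (INR n * p * (1 - p)).
Proof.
  intros Hn Hc HJ1 HJc HJn HJ Hsmall.
  assert (Hcn : (c <= n)%nat) by lia.
  assert (Sym := ptail_mode_symmetry n p c J Hp Hn Hc HJ1 HJc HJn HJ Hsmall).
  set (M := / sqrt (INR n * p * (1 - p))).
  assert (HM : forall x, (x <= n)%nat -> pmf n p x <= M) by (intros; apply pmf_upper; auto).
  assert (HM0 : 0 <= pmf n p c <= M) by (split; [apply pmf_nonneg; lra|auto]).
  assert (Lip := ptail_lipschitz n p M (k n) (S c) ltac:(lra) HM).
  assert (Hkc : Rabs (INR (k n) - INR (S c)) <= L + 1).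
  { specialize (Hk n Hn). apply Rabs_le_between in Hk. rewrite S_INR. apply Rabs_le. lra. }
  assert (Lip2 : Rabs (INR (k n) - INR (S c)) * M <= (L + 1) * M)
    by (apply Rmult_le_compat_r; lra).
  assert (Step := tail_step n (pmf n p) c Hcn). fold (ptail n p c) (ptail n p (S c)) in Step.
  replace ((L + 2) / sqrt (INR n * p * (1 - p))) with ((L + 2) * M) by (unfold M; field;
    apply Rgt_not_eq, sqrt_lt_R0, Rmult_lt_0_compat; [apply Rmult_lt_0_compat; [apply lt_0_INR; lia|]|]; lra).
  apply Rabs_le_between in Sym. apply Rabs_le_between in Lip. apply Rabs_le. lra.
Qed.

(* The constant governing the mode error of windows [J <= a sqrt n]. *)
Let K (a : R) := 4 * (4 + 2 * a ^ 2) / (p ^ 2 * (1 - p) ^ 2).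

Lemma K_pos a : 0 < K a.
Proof.
  unfold K. apply Rdiv_lt_0_compat; [assert (0 <= a ^ 2) by apply pow2_ge_0; lra|].
  apply Rmult_lt_0_compat; apply pow_lt; lra.
Qed.

Lemma mode_error_le n a J : (1 <= n)%nat -> INR J ^ 2 <= a ^ 2 * INR n ->
  mode_error n p J <= K a / INR n.
Proof.
  intros Hn HJ. assert (Hn0 : 1 <= INR n) by (apply (le_INR 1); auto).
  unfold mode_error, K, Rdiv.
  replace (4 * (4 + 2 * a ^ 2) * / (p ^ 2 * (1 - p) ^ 2) * / INR n)
    with (4 * ((4 + 2 * a ^ 2) * INR n) * / (p ^ 2 * (1 - p) ^ 2 * INR n ^ 2)) by (field; lra).
  apply Rmult_le_compat_r; [|nra].
  left. apply Rinv_0_lt_compat. repeat apply Rmult_lt_0_compat; try apply pow_lt; lra.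
Qed.

Lemma window_chebyshev_term n a J : (1 <= n)%nat -> 0 < a -> a ^ 2 * INR n / 4 <= INR J ^ 2 ->
  INR n * p * (1 - p) / INR J ^ 2 <= 1 / a ^ 2.
Proof.
  intros Hn Ha HJ. assert (Hn0 : 1 <= INR n) by (apply (le_INR 1); auto).
  assert (Ha2 : 0 < a ^ 2) by (apply pow_lt; lra).
  assert (HJ2 : 0 < INR J ^ 2) by nra.
  assert (Hq := pq_le_quarter p).
  apply (Rmult_le_reg_l (a ^ 2 * INR J ^ 2)); [nra|].
  replace (a ^ 2 * INR J ^ 2 * (INR n * p * (1 - p) / INR J ^ 2)) with (a ^ 2 * INR n * (p * (1 - p)))
    by (field; nra).
  replace (a ^ 2 * INR J ^ 2 * (1 / a ^ 2)) with (INR J ^ 2) by (field; nra).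
  assert (0 <= a ^ 2 * INR n) by nra. nra.
Qed.

(* Choosing the window [J = floor(a sqrt n)]. *)
Lemma ptail_near_half_sqrt n a : (1 <= n)%nat -> 1 <= a ->
  2 + 2 * a * K a + (2 * a + 2) / p + a / (1 - p) <= sqrt (INR n) ->
  Rabs (ptail n p (k n) - 1 / 2) <=
    a * K a / sqrt (INR n) + 1 / a ^ 2 + (L + 2) / sqrt (INR n * p * (1 - p)).
Proof.
  intros Hn Ha Hr. set (r := sqrt (INR n)) in *.
  assert (Hn0 : 1 <= INR n) by (apply (le_INR 1); auto).
  assert (Hrr : r * r = INR n) by (apply sqrt_sqrt; lra).
  assert (Hpq : 0 < p * (1 - p)) by nra.
  assert (HK := K_pos a). assert (HaK0 : 0 <= a * K a) by nra.
  assert (Hterms : 0 < (2 * a + 2) / p /\ 0 < a / (1 - p))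
    by (split; apply Rdiv_lt_0_compat; lra).
  assert (Hr2 : 2 <= r) by lra.
  destruct (nat_floor (INR n * p)) as [c Hc]; [nra|].
  destruct (nat_floor (a * r)) as [J HJ]; [nra|].
  assert (HJ1 : (1 <= J)%nat) by (apply (INR_le 1); simpl; nra).
  assert (HJ1r : 1 <= INR J) by (apply (le_INR 1); auto).
  assert (HJlow : a * r / 2 <= INR J) by nra.
  assert (Hmid : a * r + 1 <= INR n * p / 2).
  { assert (H1 : (2 * a + 2) / p <= r) by lra. apply div_le_to_mul_le in H1; [|lra].
    rewrite <- Hrr. nra. }
  assert (Hright : a * r <= INR n * (1 - p)).
  { assert (H1 : a / (1 - p) <= r) by lra. apply div_le_to_mul_le in H1; [|lra].
    rewrite <- Hrr. nra. }
  assert (HJc : (J <= c)%nat) by (apply INR_le; lra).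
  assert (HJn : (c + J <= n)%nat) by (apply INR_le; rewrite plus_INR; lra).
  set (e := mode_error n p J).
  assert (He : e <= K a / INR n)
    by (apply mode_error_le; auto; rewrite <- Hrr; assert (0 <= INR J) by apply pos_INR; nra).
  assert (HJe : INR J * e <= a * K a / r).
  { apply (Rle_trans _ (a * r * (K a / INR n))).
    - apply Rmult_le_compat; [apply pos_INR|apply mode_error_nonneg; auto|lra|lra].
    - rewrite <- Hrr. right. field. lra. }
  assert (HaK : a * K a / r <= 1 / 2).
  { apply (Rmult_le_reg_l r); [lra|]. replace (r * (a * K a / r)) with (a * K a) by (field; lra). lra. }
  assert (Htail := window_chebyshev_term n a J Hn ltac:(lra) ltac:(rewrite <- Hrr; nra)).
  assert (B := ptail_near_half n c J Hn Hc HJ1 HJc HJn ltac:(lra) ltac:(fold e; lra)).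
  fold e in B. lra.
Qed.

Lemma ptail_limit_at_mean : is_lim_seq (fun n => ptail n p (k n)) (1 / 2).
Proof.
  apply is_lim_seq_of_bound. intros eps Heps.
  set (a := 3 / eps + 1).
  assert (H3e : 0 < 3 / eps) by (apply Rdiv_lt_0_compat; lra).
  assert (Ha : 1 <= a) by (unfold a; lra).
  assert (Hpq : 0 < p * (1 - p)) by nra.
  assert (HK := K_pos a). assert (HaK0 : 0 <= a * K a) by nra.
  assert (Hterms : 0 < (2 * a + 2) / p /\ 0 < a / (1 - p) /\ 0 < 3 * (a * K a) / eps)
    by (repeat split; apply Rdiv_lt_0_compat; nra).
  set (R0 := 2 + 2 * a * K a + (2 * a + 2) / p + a / (1 - p)).
  generalize (filter_and _ _ (eventually_INR_ge 1)
    (filter_and _ _ (eventually_sqrt_ge 1 (R0 + 3 * (a * K a) / eps) Rlt_0_1)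
                    (eventually_sqrt_ge (p * (1 - p)) (3 * (L + 2) / eps) Hpq))).
  apply filter_imp. intros n (Hn1 & Hr & Hs).
  rewrite Rmult_1_r in Hr. rewrite <- Rmult_assoc in Hs.
  assert (Hn : (1 <= n)%nat) by (apply (INR_le 1); auto).
  assert (B := ptail_near_half_sqrt n a Hn Ha ltac:(unfold R0 in Hr; lra)).
  assert (Hr0 : 0 < sqrt (INR n)) by (apply sqrt_lt_R0; lra).
  assert (Hs0 : 0 < sqrt (INR n * p * (1 - p)))
    by (apply sqrt_lt_R0, Rmult_lt_0_compat; [apply Rmult_lt_0_compat|]; lra).
  assert (T1 : a * K a / sqrt (INR n) <= eps / 3).
  { apply div_le_swap; [lra|lra|]. replace (a * K a / (eps / 3)) with (3 * (a * K a) / eps)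
      by (field; lra). unfold R0 in Hr. lra. }
  assert (T2 : 1 / a ^ 2 <= eps / 3).
  { apply div_le_swap; [apply pow_lt; lra|lra|].
    replace (1 / (eps / 3)) with (3 / eps) by (field; lra). unfold a in *. nra. }
  assert (T3 : (L + 2) / sqrt (INR n * p * (1 - p)) <= eps / 3).
  { apply div_le_swap; [lra|lra|]. replace ((L + 2) / (eps / 3)) with (3 * (L + 2) / eps)
      by (field; lra). lra. }
  lra.
Qed.

Lemma derivative_limit_at_mean : (forall n, (1 <= n)%nat -> (1 <= k n <= n)%nat) ->
  is_lim_seq (fun n => INR n * pmf (n - 1) p (k n - 1)) p_infty.
Proof.
  intros Hkn. assert (Hpq : 0 < p * (1 - p)) by nra.
  apply is_lim_seq_pinfty_of_bound. intros M.
  generalize (filter_and _ _ (eventually_INR_ge 1)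
               (eventually_sqrt_ge (p * (1 - p)) (16 * (Rabs M + 1 / 4 + L) + 64) Hpq)).
  apply filter_imp. intros n [Hn1 Hs]. rewrite <- Rmult_assoc in Hs.
  assert (Hn : (1 <= n)%nat) by (apply (INR_le 1); auto).
  specialize (Hkn n Hn). specialize (Hk n Hn).
  destruct n as [|m]; [lia|]. destruct (k (S m)) as [|a] eqn:Ea; [lia|].
  replace (S m - 1)%nat with m by lia. replace (S a - 1)%nat with a by lia.
  assert (HM := Rle_abs M). assert (HM0 := Rabs_pos M).
  assert (Low := pmf_lower_near_mean m p a L Hp ltac:(lia) ltac:(lra) Hk).
  assert (HB := pmf_nonneg m p a ltac:(lra)).
  assert (Hq := pq_le_quarter p).
  (* [n p (1-p) P <= n P] as [p (1-p) <= 1/4]. *)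
  assert (INR (S m) * p * (1 - p) * pmf m p a <= INR (S m) * pmf m p a).
  { assert (0 <= INR (S m) * pmf m p a) by (apply Rmult_le_pos; [apply pos_INR|auto]).
    replace (INR (S m) * p * (1 - p) * pmf m p a) with (p * (1 - p) * (INR (S m) * pmf m p a)) by ring.
    nra. }
  lra.
Qed.

End AtMean.

(** The threshold [1 + floor((n-1) alpha)] of [phi], so that
    [phi n alpha t = P(Bin(n,t) >= threshold n alpha)]. *)

Definition threshold (n : nat) (alpha : R) : nat :=
  Z.to_nat (1 + intpart ((INR n - 1) * alpha)).

Lemma threshold_nonneg n alpha : 0 <= alpha <= 1 ->
  (0 <= 1 + intpart ((INR n - 1) * alpha))%Z.
Proof.
  intros H. unfold intpart. destruct (base_Int_part ((INR n - 1) * alpha)) as [H1 H2].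
  assert (-1 <= (INR n - 1) * alpha) by (assert (0 <= INR n) by apply pos_INR; nra).
  assert (-2 < Int_part ((INR n - 1) * alpha))%Z by (apply lt_IZR; lra). lia.
Qed.

Lemma threshold_INR n alpha : 0 <= alpha <= 1 ->
  INR (threshold n alpha) = 1 + IZR (Int_part ((INR n - 1) * alpha)).
Proof.
  intros H. unfold threshold. rewrite INR_IZR_INZ, Znat.Z2Nat.id by (apply threshold_nonneg; auto).
  rewrite plus_IZR. reflexivity.
Qed.

Lemma phi_ptail n alpha t : 0 <= alpha <= 1 -> phi n alpha t = ptail n t (threshold n alpha).
Proof.
  intros H. unfold phi, ptail, tail. rewrite sum_f_R0_sumr. apply sumr_ext. intros i _.
  assert (H0 := threshold_nonneg n alpha H). unfold threshold, pmf.
  set (z := (1 + intpart ((INR n - 1) * alpha))%Z) in *.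
  destruct (Z.leb_spec z (Z.of_nat i)), (Nat.leb_spec (Z.to_nat z) i); try lia; reflexivity.
Qed.

Lemma threshold_near n alpha gamma K : 0 <= gamma <= 1 -> 0 <= alpha <= 1 -> (1 <= n)%nat ->
  Rabs (alpha - gamma) <= K / INR n ->
  (1 <= threshold n alpha <= n)%nat /\ Rabs (INR (threshold n alpha) - INR n * gamma) <= Rabs K + 1.
Proof.
  intros Hga Hal Hn HK.
  assert (Hn0 : 1 <= INR n) by (apply (le_INR 1); auto).
  assert (E := threshold_INR n alpha Hal).
  destruct (base_Int_part ((INR n - 1) * alpha)) as [B1 B2].
  set (z := Int_part ((INR n - 1) * alpha)) in *.
  assert (Hx : 0 <= (INR n - 1) * alpha <= INR n - 1) by (split; nra).
  assert (HK2 : INR n * Rabs (alpha - gamma) <= K).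
  { apply (Rmult_le_compat_l (INR n)) in HK; [|lra].
    replace (INR n * (K / INR n)) with K in HK by (field; lra). exact HK. }
  assert (Hd : Rabs (INR n * (alpha - gamma)) <= K) by (rewrite Rabs_mult, Rabs_right; lra).
  apply Rabs_le_between in Hd. assert (HKa := Rle_abs K).
  split; [split|].
  - apply INR_le. rewrite E. assert (-1 < z)%Z by (apply lt_IZR; lra).
    assert (0 <= IZR z) by (apply IZR_le; lia). simpl. lra.
  - apply INR_le. rewrite E. lra.
  - rewrite E. apply Rabs_le. split; nra.
Qed.

Lemma indic_in A x : A x -> indic A x = 1.
Proof. intros H. unfold indic. destruct (excluded_middle_informative (A x)); tauto. Qed.

Lemma indic_out A x : ~ A x -> indic A x = 0.
Proof. intros H. unfold indic. destruct (excluded_middle_informative (A x)); tauto. Qed.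

Theorem proposition3p12 (gamma : R) (g : nat -> R)
  (hgamma : 0 <= gamma <= 1)
  (hg : forall n, 0 <= g n <= 1)
  (hO : exists K : R, forall n : nat, (1 <= n)%nat -> Rabs (g n - gamma) <= K / INR n) :
  forall u : R, 0 < u < 1 ->
    is_lim_seq (fun n => phi n (g n) u)
      (1 / 2 * indic (fun x => x = gamma) u + indic (fun x => gamma < x <= 1) u)
    /\ (u <> gamma -> is_lim_seq (fun n => Derive (phi n (g n)) u) 0)
    /\ (u = gamma -> is_lim_seq (fun n => Derive (phi n (g n)) u) p_infty).
Proof.
  intros u Hu. destruct hO as [K HK].
  set (k := fun n => threshold n (g n)).
  assert (Hk : forall n, (1 <= n)%nat -> (1 <= k n <= n)%nat) by (intros; apply (threshold_near n (g n) gamma K); auto).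
  assert (HkL : forall n, (1 <= n)%nat -> Rabs (INR (k n) - INR n * gamma) <= Rabs K + 1)
    by (intros; apply (threshold_near n (g n) gamma K); auto).
  assert (HL : 0 <= Rabs K + 1) by (assert (H := Rabs_pos K); lra).
  assert (Hval : forall n, phi n (g n) u = ptail n u (k n)) by (intros; apply phi_ptail; auto).
  assert (Hder : eventually (fun n => INR n * pmf (n - 1) u (k n - 1) = Derive (phi n (g n)) u)).
  { exists 1%nat. intros n Hn. symmetry.
    rewrite (Derive_ext _ (fun t => ptail n t (k n))) by (intros; apply phi_ptail; auto).
    apply is_derive_unique, derive_ptail; auto. }
  split; [|split].
  - apply (is_lim_seq_ext (fun n => ptail n u (k n))); [intros; now rewrite Hval|].
    destruct (Req_dec u gamma) as [->|Hne].
    + rewrite indic_in, indic_out by (auto || lra).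
      replace (1 / 2 * 1 + 0) with (1 / 2) by ring. now apply (ptail_limit_at_mean gamma (Rabs K + 1)).
    + rewrite (indic_out (fun x => x = gamma)), Rmult_0_r, Rplus_0_l by auto.
      assert (Lim : is_lim_seq (fun n => ptail n u (k n)) (Finite (if Rlt_dec gamma u then 1 else 0)))
        by (apply (ptail_limit_off_mean u gamma (Rabs K + 1)); auto).
      destruct (Rlt_dec gamma u); [rewrite indic_in|rewrite indic_out]; auto; lra.
  - intros Hne. eapply is_lim_seq_ext_loc; [exact Hder|].
    now apply (derivative_limit_off_mean u gamma (Rabs K + 1)).
  - intros ->. eapply is_lim_seq_ext_loc; [exact Hder|].
    now apply (derivative_limit_at_mean gamma (Rabs K + 1)).
Qed.
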